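(* Let $(X,V)$ and $(\overline{X},\overline{V})$ be global solutions of the discrete Motsch–Tadmor model (as in the context) whose initial data satisfy \[ \max\{\|\Delta^x(0)\|_F,\|\Delta^{\overline{x}}(0)\|_F\}<M,\quad \|\Delta^v(0)\|_F<\kappa\int_{\|\Delta^x(0)\|_F}^M\psi(s)\,ds,\quad \|\Delta^{\overline{v}}(0)\|_F<\kappa\int_{\|\Delta^{\overline{x}}(0)\|_F}^M\psi(s)\,ds. \] For $i,j\in\{1,\dots,N\}$ and $n\ge0$ let \[ \mathcal{I}_2^{ij}=h\kappa\sum_{l\ne i,j}\Big[\overline{\phi}_{il}(n)\big(\Delta^v_{li}(n)-\Delta^{\overline{v}}_{li}(n)\big)-\overline{\phi}_{jl}(n)\big(\Delta^v_{lj}(n)-\Delta^{\overline{v}}_{lj}(n)\big)\Big], \] and $\alpha(n)=\max_{1\le i,j\le N}(1-\overline{\phi}_{ij}(n)-\overline{\phi}_{ii}(n))^2$. Then \[ \sum_{i,j=1}^N\|\mathcal{I}_2^{ij}\|^2\le2h^2\kappa^2\Big(\alpha(n)+\frac{L_a^2M^2}{Nc_1^2}\Big(1+\frac{c_2}{c_1}\Big)^2\Big)\|\Delta^v(n)-\Delta^{\overline{v}}(n)\|_F^2 . \]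
   Context: Discrete MT model: fix $N\ge1$, $d\ge1$, $\kappa>0$, $h>0$, and $a:[0,\infty)\to\mathbb{R}$ with constants $0<c_1\le c_2$, $c_1\le a\le c_2$, $|a(r_1)-a(r_2)|\le L_a|r_1-r_2|$ ($L_a>0$); $0<h<\min\{1,1/\kappa\}$. A solution satisfies $x_i(n+1)=x_i(n)+hv_i(n)$, $v_i(n+1)=v_i(n)+h\kappa\sum_j\phi_{ij}(n)(v_j(n)-v_i(n))$ with $\phi_{ij}(n)=\frac{a(\|x_i(n)-x_j(n)\|)}{\sum_ka(\|x_i(n)-x_k(n)\|)}$; $\overline{\phi}_{ij}(n)$ is defined likewise from $\overline{X}(n)$. Notation: $\Delta^x_{ij}=x_i-x_j$, $\Delta^v_{ij}=v_i-v_j$, similarly $\Delta^{\overline{x}},\Delta^{\overline{v}}$; $\|A\|_F=(\sum_{i,j}\|A_{ij}\|^2)^{1/2}$. Constants: $\|\phi\|_{\mathrm{Lip}}=\frac{L_a}{Nc_1}(1+\frac{c_2}{c_1})$, $M=\frac{1}{4N\|\phi\|_{\mathrm{Lip}}}$, $\psi(s)=1-\|\phi\|_{\mathrm{Lip}}Ns$. *)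

From HB Require Import structures.
From mathcomp Require Import all_boot all_order all_algebra.
From mathcomp Require Import all_classical all_reals all_analysis.
Set Implicit Arguments. Unset Strict Implicit. Unset Printing Implicit Defensive.
Import Order.TTheory GRing.Theory Num.Theory.
Import numFieldNormedType.Exports.
Local Open Scope ring_scope.

Section MT.
Variable R : realType.

Definition enorm (d : nat) (v : 'rV[R]_d) : R := Num.sqrt (\sum_(k < d) v 0 k ^+ 2).

Definition config (N d : nat) := nat -> 'I_N -> 'rV[R]_d.

Definition mt_phi (N d : nat) (a : R -> R) (X : config N d) (n : nat) (i j : 'I_N) : R :=
  a (enorm (X n i - X n j)) / \sum_(k < N) a (enorm (X n i - X n k)).

Definition is_MT_solution (N d : nat) (kappa h : R) (a : R -> R) (X V : config N d) : Prop :=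
  forall (n : nat) (i : 'I_N),
    X n.+1 i = X n i + h *: V n i /\
    V n.+1 i = V n i + (h * kappa) *: \sum_(j < N) mt_phi a X n i j *: (V n j - V n i).

Definition Delta (N d : nat) (Z : config N d) (n : nat) (i j : 'I_N) : 'rV[R]_d :=
  Z n i - Z n j.

Definition frob (N d : nat) (A : 'I_N -> 'I_N -> 'rV[R]_d) : R :=
  Num.sqrt (\sum_(i < N) \sum_(j < N) enorm (A i j) ^+ 2).

Definition phi_lip (N : nat) (La c1 c2 : R) : R := La / (N%:R * c1) * (1 + c2 / c1).
Definition bigM (N : nat) (La c1 c2 : R) : R := 1 / (4 * N%:R * phi_lip N La c1 c2).
Definition psi (N : nat) (La c1 c2 : R) (s : R) : R := 1 - phi_lip N La c1 c2 * N%:R * s.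

Definition I2 (N d : nat) (kappa h : R) (a : R -> R) (X V Xb Vb : config N d)
  (n : nat) (i j : 'I_N) : 'rV[R]_d :=
  (h * kappa) *: \sum_(l < N | (l != i) && (l != j))
     (mt_phi a Xb n i l *: (Delta V n l i - Delta Vb n l i)
      - mt_phi a Xb n j l *: (Delta V n l j - Delta Vb n l j)).

Definition alpha (N d : nat) (a : R -> R) (Xb : config N d) (n : nat) : R :=
  \big[Num.max/0]_(i < N) \big[Num.max/0]_(j < N)
     (1 - mt_phi a Xb n i j - mt_phi a Xb n i i) ^+ 2.

End MT.

From HB Require Import structures.
From mathcomp Require Import all_boot all_order all_algebra.
From mathcomp Require Import all_classical all_reals all_analysis.
From mathcomp Require Import ring lra.
Import Order.TTheory GRing.Theory Num.Theory.
Import numFieldNormedType.Exports.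
Set Implicit Arguments. Unset Strict Implicit. Unset Printing Implicit Defensive.
Local Open Scope ring_scope.

(* Write W = Delta^v - Delta^vbar.  Since W_lj = W_li + W_ij, the term I_2^{ij} equals
   h kappa (A_ij - c_ij W_ij) with A_ij = sum_{l <> i,j} (phibar_il - phibar_jl) W_li and
   c_ij = sum_{l <> i,j} phibar_jl = 1 - phibar_ji - phibar_jj, so |I_2^{ij}|^2 is at most
   2 h^2 kappa^2 (|A_ij|^2 + c_ij^2 |W_ij|^2).  The weights are Lipschitz in the positions
   with constant ||phi||_Lip, so by Cauchy-Schwarz the A part contributes at most
   ||phi||_Lip^2 N ||Delta^xbar||_F^2 ||W||_F^2, and the c part at most alpha ||W||_F^2.
   Finally ||Delta^xbar(n)||_F < M for every n: along the scheme
   ||Delta^xbar(n+1)||_F <= ||Delta^xbar(n)||_F + h ||Delta^vbar(n)||_F and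
   ||Delta^vbar(n+1)||_F <= (1 - h kappa psi(||Delta^xbar(n)||_F)) ||Delta^vbar(n)||_F,
   and since psi is affine and nonnegative below M this propagates the initial bound
   ||Delta^vbar||_F < kappa int_{||Delta^xbar||_F}^M psi. *)

Section FiniteSums.
Variable R : realFieldType.

Lemma sumr_sqr_ge0 (I : finType) (f : I -> R) : 0 <= \sum_i f i ^+ 2.
Proof. by apply: sumr_ge0 => i _; exact: sqr_ge0. Qed.

Lemma cauchy_schwarz_sum (I : finType) (f g : I -> R) :
  (\sum_i f i * g i) ^+ 2 <= (\sum_i f i ^+ 2) * (\sum_i g i ^+ 2).
Proof.
(* Lagrange's identity: the defect is half a sum of squares. *)
have lagrange : \sum_i \sum_j (f i * g j - f j * g i) ^+ 2 =
    2 * ((\sum_i f i ^+ 2) * (\sum_i g i ^+ 2) - (\sum_i f i * g i) ^+ 2).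
  have sym : \sum_i \sum_j f j ^+ 2 * g i ^+ 2 = \sum_i \sum_j f i ^+ 2 * g j ^+ 2.
    exact: exchange_big.
  rewrite expr2 !big_distrlr /= (_ : forall P Q : R, 2 * (P - Q) = P + P - 2 * Q);
    last by move=> P Q; ring.
  rewrite -{2}sym mulr_sumr -big_split -sumrB /=; apply: eq_bigr => i _.
  rewrite mulr_sumr -big_split -sumrB /=; apply: eq_bigr => j _; ring.
have : 0 <= \sum_i \sum_j (f i * g j - f j * g i) ^+ 2.
  by apply: sumr_ge0 => i _; exact: sumr_sqr_ge0.
by rewrite lagrange pmulr_rge0 // subr_ge0.
Qed.

Lemma sqr_sum_le_card (n : nat) (x : 'I_n -> R) :
  (\sum_i x i) ^+ 2 <= n%:R * \sum_i x i ^+ 2.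
Proof.
have := cauchy_schwarz_sum x (fun _ => 1).
under eq_bigr => i _ do rewrite mulr1.
under [X in _ <= _ * X]eq_bigr => i _ do rewrite expr1n.
by rewrite sumr_const card_ord mulrC -mulr_natl mulr1.
Qed.

End FiniteSums.

Section SquareRoots.
Variable R : rcfType.

Lemma ler_sqrtr_of_sqr (x y : R) : 0 <= y -> x <= y ^+ 2 -> Num.sqrt x <= y.
Proof.
by move=> y0 xy; rewrite -(ger0_norm y0) -sqrtr_sqr ler_sqrt // sqr_ge0.
Qed.

Lemma minkowski_sum (I : finType) (f g : I -> R) :
  Num.sqrt (\sum_i (f i + g i) ^+ 2) <=
  Num.sqrt (\sum_i f i ^+ 2) + Num.sqrt (\sum_i g i ^+ 2).
Proof.
apply: ler_sqrtr_of_sqr; first by rewrite addr_ge0 // sqrtr_ge0.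
set A := \sum_i f i ^+ 2; set B := \sum_i g i ^+ 2.
have A0 : 0 <= A := sumr_sqr_ge0 f.
have B0 : 0 <= B := sumr_sqr_ge0 g.
have expand : \sum_i (f i + g i) ^+ 2 = A + B + 2 * \sum_i f i * g i.
  by rewrite /A /B mulr_sumr -!big_split /=; apply: eq_bigr => i _; ring.
have cs : \sum_i f i * g i <= Num.sqrt A * Num.sqrt B.
  rewrite -sqrtrM //; apply: le_trans (ler_norm _) _.
  by rewrite -sqrtr_sqr ler_sqrt ?mulr_ge0 // cauchy_schwarz_sum.
rewrite expand sqrrD !sqr_sqrtr //; lra.
Qed.

End SquareRoots.

Section EuclideanNorm.
Variables (R : realType) (d : nat).
Implicit Types u v w : 'rV[R]_d.

Lemma enorm_ge0 v : 0 <= enorm v.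
Proof. exact: sqrtr_ge0. Qed.

Lemma enormZ (c : R) v : enorm (c *: v) = `|c| * enorm v.
Proof.
rewrite /enorm (eq_bigr (fun k => c ^+ 2 * v 0 k ^+ 2)); last first.
  by move=> k _; rewrite mxE exprMn.
by rewrite -mulr_sumr sqrtrM ?sqr_ge0 // sqrtr_sqr.
Qed.

Lemma enorm0 : enorm (0 : 'rV[R]_d) = 0.
Proof. by rewrite -(scale0r 0) enormZ normr0 mul0r. Qed.

Lemma enormN v : enorm (- v) = enorm v.
Proof. by rewrite -scaleN1r enormZ normrN normr1 mul1r. Qed.

Lemma enormD u v : enorm (u + v) <= enorm u + enorm v.
Proof.
rewrite /enorm (eq_bigr (fun k => (u 0 k + v 0 k) ^+ 2)); last by move=> k _; rewrite mxE.
exact: minkowski_sum.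
Qed.

Lemma distr_enorm u v : enorm (u - v) = enorm (v - u).
Proof. by rewrite -enormN opprB. Qed.

Lemma ler_enorm_dist u v : `|enorm u - enorm v| <= enorm (u - v).
Proof.
have := enormD (u - v) v; have := enormD (v - u) u.
rewrite !subrK distr_enorm ler_norml => ? ?; apply/andP; split; lra.
Qed.

Lemma ler_enorm_sum (I : finType) (P : pred I) (F : I -> 'rV[R]_d) :
  enorm (\sum_(i | P i) F i) <= \sum_(i | P i) enorm (F i).
Proof.
elim/big_ind2: _ => [|x1 x2 y1 y2 le1 le2|//]; first by rewrite enorm0.
exact: le_trans (enormD _ _) (lerD le1 le2).
Qed.

Lemma sqr_enormB_le u v : enorm (u - v) ^+ 2 <= 2 * (enorm u ^+ 2 + enorm v ^+ 2).
Proof.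
have le_uv := enormD u (- v); rewrite enormN in le_uv.
apply: le_trans (_ : (enorm u + enorm v) ^+ 2 <= _).
  by rewrite ler_sqr ?nnegrE ?addr_ge0 ?enorm_ge0.
have := sqr_ge0 (enorm u - enorm v); rewrite sqrrB sqrrD => ?; lra.
Qed.

Lemma sqr_enorm_sum_scale_le (N : nat) (P : pred 'I_N) (c : 'I_N -> R)
    (W : 'I_N -> 'rV[R]_d) (K : R) :
  0 <= K -> (forall l, `|c l| <= K) ->
  enorm (\sum_(l | P l) c l *: W l) ^+ 2 <= K ^+ 2 * N%:R * \sum_l enorm (W l) ^+ 2.
Proof.
move=> K0 le_cK.
have le_sum : enorm (\sum_(l | P l) c l *: W l) <= K * \sum_l enorm (W l).
  apply: le_trans (ler_enorm_sum _ _) _.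
  rewrite mulr_sumr big_mkcond /=; apply: ler_sum => l _.
  case: (P l); last by rewrite mulr_ge0 ?enorm_ge0.
  by rewrite enormZ ler_wpM2r ?enorm_ge0.
apply: le_trans (_ : (K * \sum_l enorm (W l)) ^+ 2 <= _).
  by rewrite ler_sqr ?nnegrE ?mulr_ge0 ?sumr_ge0 // => *; rewrite enorm_ge0.
by rewrite exprMn -mulrA ler_wpM2l ?sqr_ge0 // sqr_sum_le_card.
Qed.

End EuclideanNorm.

Section Frobenius.
Variables (R : realType) (N d : nat).
Implicit Types A B : 'I_N -> 'I_N -> 'rV[R]_d.

Lemma frob_ge0 A : 0 <= frob A.
Proof. exact: sqrtr_ge0. Qed.

Lemma frob_sqr A : frob A ^+ 2 = \sum_i \sum_j enorm (A i j) ^+ 2.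
Proof. by rewrite sqr_sqrtr // sumr_ge0 // => i _; exact: sumr_sqr_ge0. Qed.

Lemma eq_frob A B : (forall i j, A i j = B i j) -> frob A = frob B.
Proof.
by move=> eqAB; rewrite /frob; under eq_bigr do under eq_bigr do rewrite eqAB.
Qed.

Lemma frobD A B : frob (fun i j => A i j + B i j) <= frob A + frob B.
Proof.
rewrite /frob !pair_big /=.
apply: le_trans (minkowski_sum (fun p => enorm (A p.1 p.2)) (fun p => enorm (B p.1 p.2))).
rewrite ler_sqrt ?sumr_sqr_ge0 //; apply: ler_sum => p _.
by rewrite ler_sqr ?nnegrE ?addr_ge0 ?enorm_ge0 ?enormD.
Qed.

Lemma frobZ (c : R) A : frob (fun i j => c *: A i j) = `|c| * frob A.
Proof.
rewrite /frob (eq_bigr (fun i => c ^+ 2 * \sum_j enorm (A i j) ^+ 2)); last first.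
  move=> i _; rewrite mulr_sumr; apply: eq_bigr => j _.
  by rewrite enormZ exprMn real_normK // num_real.
by rewrite -mulr_sumr sqrtrM ?sqr_ge0 // sqrtr_sqr.
Qed.

Lemma sum_col_le_frob A i : \sum_l enorm (A l i) ^+ 2 <= frob A ^+ 2.
Proof.
rewrite frob_sqr; apply: ler_sum => l _.
by rewrite (bigD1 i) //= lerDl sumr_ge0 // => j _; exact: sqr_ge0.
Qed.

End Frobenius.

Lemma ler_dist_ratio (R : realFieldType) (x y s t m c D E : R) :
  0 < m -> m <= s -> m <= t -> `|y| <= c -> `|x - y| <= D -> `|s - t| <= E ->
  `|x / s - y / t| <= D / m + c * E / m ^+ 2.
Proof.
move=> m0 ms mt yc xyD stE.
have s0 : 0 < s := lt_le_trans m0 ms.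
have t0 : 0 < t := lt_le_trans m0 mt.
have -> : x / s - y / t = (x - y) / s + y * (t - s) / (s * t).
  by field; rewrite !gt_eqF.
apply: le_trans (ler_normD _ _) (lerD _ _).
  rewrite normrM normfV (gtr0_norm s0).
  by apply: ler_pM; rewrite ?invr_ge0 ?(ltW s0) ?lef_pV2 ?posrE.
rewrite !normrM normfV (gtr0_norm (mulr_gt0 s0 t0)) distrC.
apply: ler_pM; first exact: mulr_ge0.
- by rewrite invr_ge0 mulr_ge0 ?ltW.
- exact: ler_pM.
- by rewrite lef_pV2 ?posrE ?exprn_gt0 ?mulr_gt0 // expr2 ler_pM ?(ltW m0).
Qed.

Definition Delta_diff (R : realType) (N d : nat) (Z Zb : config R N d) (n : nat)
  (i j : 'I_N) : 'rV[R]_d := Delta Z n i j - Delta Zb n i j.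

Section Weights.
Variables (R : realType) (N d : nat) (a : R -> R) (c1 c2 La : R).
Hypothesis N_gt0 : (0 < N)%N.
Hypothesis c1_gt0 : 0 < c1.
Hypothesis La_ge0 : 0 <= La.
Hypothesis a_bounds : forall r, 0 <= r -> c1 <= a r <= c2.
Hypothesis a_lipschitz :
  forall r1 r2, 0 <= r1 -> 0 <= r2 -> `|a r1 - a r2| <= La * `|r1 - r2|.
Variables (X : config R N d) (n : nat).

Lemma phi_lip_ge0 : 0 <= phi_lip N La c1 c2.
Proof.
have /andP[c1_a0 a0_c2] := a_bounds (lexx 0).
by rewrite /phi_lip !mulr_ge0 ?invr_ge0 ?mulr_ge0 ?addr_ge0 ?divr_ge0 // ltW //;
  apply: lt_le_trans (le_trans c1_a0 a0_c2).
Qed.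

Lemma mt_denom_ge i : N%:R * c1 <= \sum_k a (enorm (X n i - X n k)).
Proof.
have : \sum_(k < N) c1 <= \sum_k a (enorm (X n i - X n k)).
  by apply: ler_sum => k _; have /andP[] := a_bounds (enorm_ge0 (X n i - X n k)).
by rewrite sumr_const card_ord mulr_natl.
Qed.

Lemma mt_phi_sum1 i : \sum_l mt_phi a X n i l = 1.
Proof.
rewrite /mt_phi -mulr_suml divff // gt_eqF // (lt_le_trans _ (mt_denom_ge i)) //.
by rewrite mulr_gt0 ?ltr0n.
Qed.

Lemma a_dist_lipschitz i j l :
  `|a (enorm (X n i - X n l)) - a (enorm (X n j - X n l))| <= La * enorm (X n i - X n j).
Proof.
apply: le_trans (a_lipschitz (enorm_ge0 _) (enorm_ge0 _)) _.
rewrite ler_wpM2l //; apply: le_trans (ler_enorm_dist _ _) _.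
by rewrite opprB addrA subrK.
Qed.

Lemma mt_phi_lipschitz i j l :
  `|mt_phi a X n i l - mt_phi a X n j l| <= phi_lip N La c1 c2 * enorm (X n i - X n j).
Proof.
set e := enorm (X n i - X n j).
have Nc1_gt0 : 0 < N%:R * c1 by rewrite mulr_gt0 ?ltr0n.
have /andP[c1_a a_c2] := a_bounds (enorm_ge0 (X n j - X n l)).
have denom_dist : `|\sum_k a (enorm (X n i - X n k)) - \sum_k a (enorm (X n j - X n k))|
    <= N%:R * (La * e).
  rewrite -sumrB; apply: le_trans (ler_norm_sum _ _ _) _.
  rewrite (_ : N%:R * _ = \sum_(k < N) La * e); last by rewrite sumr_const card_ord mulr_natl.
  by apply: ler_sum => k _; exact: a_dist_lipschitz.
apply: le_trans (ler_dist_ratio (c := c2) Nc1_gt0 (mt_denom_ge i) (mt_denom_ge j) _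
  (a_dist_lipschitz i j l) denom_dist) _.
  by rewrite ger0_norm // (le_trans (ltW c1_gt0)).
rewrite le_eqVlt; apply/orP; left; apply/eqP.
rewrite /phi_lip /e; field; by rewrite pnatr_eq0 -lt0n N_gt0 gt_eqF.
Qed.

Lemma sum_sqr_weight_diff_le (P : 'I_N -> 'I_N -> pred 'I_N)
    (W : 'I_N -> 'I_N -> 'rV[R]_d) :
  \sum_i \sum_j enorm (\sum_(l | P i j l) (mt_phi a X n i l - mt_phi a X n j l) *: W l i) ^+ 2
  <= phi_lip N La c1 c2 ^+ 2 * N%:R * frob (Delta X n) ^+ 2 * frob W ^+ 2.
Proof.
have L0 := phi_lip_ge0.
set L := phi_lip N La c1 c2 in L0 *.
set C := L ^+ 2 * N%:R * frob W ^+ 2.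
have entry_le i j : enorm (\sum_(l | P i j l)
    (mt_phi a X n i l - mt_phi a X n j l) *: W l i) ^+ 2 <= C * enorm (Delta X n i j) ^+ 2.
  apply: le_trans (sqr_enorm_sum_scale_le _ _ _ (mt_phi_lipschitz i j)) _.
    by rewrite mulr_ge0 ?enorm_ge0.
  rewrite (_ : C * _ = (L * enorm (Delta X n i j)) ^+ 2 * N%:R * frob W ^+ 2);
    last by rewrite /C; ring.
  rewrite /Delta -/L; apply: ler_wpM2l; [by rewrite mulr_ge0 ?sqr_ge0 ?ler0n | exact: sum_col_le_frob].
apply: le_trans (_ : \sum_i \sum_j C * enorm (Delta X n i j) ^+ 2 <= _).
  by apply: ler_sum => i _; apply: ler_sum => j _; exact: entry_le.
rewrite (_ : _ * frob W ^+ 2 = C * frob (Delta X n) ^+ 2); last by rewrite /C; ring.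
by rewrite frob_sqr mulr_sumr; under [X in _ <= X]eq_bigr do rewrite mulr_sumr.
Qed.

Lemma frob_weight_diff_le (W : 'I_N -> 'I_N -> 'rV[R]_d) :
  frob (fun i j => \sum_l (mt_phi a X n i l - mt_phi a X n j l) *: W l i)
  <= phi_lip N La c1 c2 * N%:R * frob (Delta X n) * frob W.
Proof.
apply: ler_sqrtr_of_sqr.
  by rewrite mulr_ge0 ?frob_ge0 // mulr_ge0 ?frob_ge0 // mulr_ge0 ?ler0n // phi_lip_ge0.
apply: le_trans (sum_sqr_weight_diff_le (fun _ _ _ => true) W) _.
rewrite (_ : (_ * N%:R * _ * _) ^+ 2 = phi_lip N La c1 c2 ^+ 2 * N%:R *
    frob (Delta X n) ^+ 2 * frob W ^+ 2 * N%:R); last by ring.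
apply: ler_peMr; last by rewrite ler1n.
by rewrite mulr_ge0 ?sqr_ge0 // mulr_ge0 ?sqr_ge0 // mulr_ge0 ?sqr_ge0 ?ler0n.
Qed.

Lemma sqr_le_alpha i j : (1 - mt_phi a X n i j - mt_phi a X n i i) ^+ 2 <= alpha a X n.
Proof.
apply: le_trans (le_bigmax 0 (fun j' => (1 - mt_phi a X n i j' - mt_phi a X n i i) ^+ 2) j) _.
exact: (le_bigmax 0 (fun i' => \big[Num.max/0]_(j' < N)
  (1 - mt_phi a X n i' j' - mt_phi a X n i' i') ^+ 2) i).
Qed.

Lemma sum_mt_phi_off_pair i j : i != j ->
  \sum_(l | (l != i) && (l != j)) mt_phi a X n j l = 1 - mt_phi a X n j i - mt_phi a X n j j.
Proof.
move=> ij; rewrite -(mt_phi_sum1 j) [in RHS](bigD1 i) //= [in RHS](bigD1 j) 1?eq_sym //=.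
ring.
Qed.

Lemma I2_split (Y V Vb : config R N d) (kappa h : R) i j :
  I2 kappa h a Y V X Vb n i j = (h * kappa) *:
    (\sum_(l | (l != i) && (l != j))
        (mt_phi a X n i l - mt_phi a X n j l) *: Delta_diff V Vb n l i
     - (\sum_(l | (l != i) && (l != j)) mt_phi a X n j l) *: Delta_diff V Vb n i j).
Proof.
rewrite /I2; congr (_ *: _); rewrite scaler_suml -sumrB; apply: eq_bigr => l _.
by apply/rowP => m; rewrite /Delta_diff /Delta !mxE; ring.
Qed.

Lemma sum_sqr_off_pair_le (V Vb : config R N d) :
  \sum_i \sum_j enorm ((\sum_(l | (l != i) && (l != j)) mt_phi a X n j l)
                      *: Delta_diff V Vb n i j) ^+ 2
  <= alpha a X n * frob (Delta_diff V Vb n) ^+ 2.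
Proof.
rewrite frob_sqr mulr_sumr; apply: ler_sum => i _; rewrite mulr_sumr.
apply: ler_sum => j _; have [<-|ij] := eqVneq i j.
  by rewrite /Delta_diff /Delta !subrr scaler0 enorm0 expr0n /= mulr0.
rewrite enormZ exprMn real_normK ?num_real // ler_wpM2r ?sqr_ge0 //.
by rewrite sum_mt_phi_off_pair // sqr_le_alpha.
Qed.

Lemma sum_sqr_I2_le (Y V Vb : config R N d) (kappa h : R) :
  \sum_i \sum_j enorm (I2 kappa h a Y V X Vb n i j) ^+ 2
  <= 2 * (h * kappa) ^+ 2 *
     (alpha a X n + phi_lip N La c1 c2 ^+ 2 * N%:R * frob (Delta X n) ^+ 2) *
     frob (Delta_diff V Vb n) ^+ 2.
Proof.
set W := Delta_diff V Vb n.
have le_A := sum_sqr_weight_diff_le (fun i j l => (l != i) && (l != j)) W.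
have le_C := sum_sqr_off_pair_le V Vb.
set SA := \sum_i \sum_j _ in le_A; set SC := \sum_i \sum_j _ in le_C.
have le_split : \sum_i \sum_j enorm (I2 kappa h a Y V X Vb n i j) ^+ 2
    <= (h * kappa) ^+ 2 * 2 * (SA + SC).
  rewrite /SA /SC -big_split mulr_sumr; apply: ler_sum => i _.
  rewrite -big_split mulr_sumr; apply: ler_sum => j _.
  rewrite I2_split enormZ exprMn real_normK ?num_real // -mulrA ler_wpM2l ?sqr_ge0 //.
  exact: sqr_enormB_le.
apply: le_trans le_split _.
rewrite (_ : 2 * _ * _ * _ = (h * kappa) ^+ 2 * 2 *
  (phi_lip N La c1 c2 ^+ 2 * N%:R * frob (Delta X n) ^+ 2 * frob W ^+ 2
   + alpha a X n * frob W ^+ 2)); last by ring.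
by apply: ler_wpM2l; [rewrite mulr_ge0 ?sqr_ge0 | exact: lerD].
Qed.

End Weights.

Lemma phi_lip_gt0 (R : realType) (N : nat) (La c1 c2 : R) :
  (0 < N)%N -> 0 < La -> 0 < c1 -> c1 <= c2 -> 0 < phi_lip N La c1 c2.
Proof.
move=> N0 La0 c10 c12; rewrite /phi_lip mulr_gt0 ?divr_gt0 ?mulr_gt0 ?ltr0n //.
by rewrite addr_gt0 // divr_gt0 // (lt_le_trans c10).
Qed.

Definition psi_primitive (R : realFieldType) (p s : R) : R := s - p / 2 * s ^+ 2.

Lemma integral_one_sub_mul (R : realType) (p x y : R) : x < y ->
  \int[lebesgue_measure]_(s in `[x, y]) (1 - p * s) = psi_primitive p y - psi_primitive p x.
Proof.
move=> xy.
have der_P (t : R) : is_derive t 1 (psi_primitive p) (1 - p * t).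
  rewrite (_ : psi_primitive p = @id R - (p / 2) \*: (@id R ^+ 2)); last exact/funext.
  apply: is_derive_eq; rewrite /= scaler1 expr1.
  by rewrite -[X in _ - X = _]/((p / 2) * (2 * t)); field.
have cont_P : continuous (psi_primitive p).
  move=> t; have [dP _] := der_P t; apply: differentiable_continuous.
  exact/derivable1_diffP.
rewrite /Rintegral (@continuous_FTC2 _ _ (psi_primitive p)) //.
- apply: (@continuous_subspaceT R R) => t.
  by apply: continuousB; [exact: cvg_cst | apply: continuousM; [exact: cvg_cst | exact: cvg_id]].
- split; first by move=> t _; have [] := der_P t.
  + exact/cvg_at_right_filter/cont_P.
  + exact/cvg_at_left_filter/cont_P.
- by move=> t _; rewrite derive1E; have [_ ->] := der_P t.
Qed.

Lemma lyapunov_step (R : realFieldType) (h k p M x v x' v' : R) :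
  0 < h -> 0 < k -> h * k < 1 -> 0 <= p -> p * M = 1 / 4 -> 0 <= x -> 0 <= v ->
  x' <= x + h * v -> v' <= (1 - h * k * (1 - p * x)) * v -> x < M ->
  v < k * (psi_primitive p M - psi_primitive p x) ->
  x' < M /\ v' < k * (psi_primitive p M - psi_primitive p x').
Proof.
move=> h0 k0 hk1 p0 pM x0 v0 x'_le v'_le xM v_lt.
have psi_ge0 : 0 <= 1 - p * x by have := ler_wpM2l p0 (ltW xM); lra.
have gap_le : psi_primitive p M - psi_primitive p x <= M - x.
  have : p * x ^+ 2 <= p * M ^+ 2 by rewrite ler_wpM2l // ler_sqr ?nnegrE //; lra.
  rewrite /psi_primitive; lra.
have hv_lt : h * v < h * k * (M - x).
  by rewrite -mulrA ltr_pM2l // (lt_le_trans v_lt) // ler_pM2l.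
have x'M : x' < M.
  have : h * k * (M - x) <= M - x by rewrite ler_piMl ?subr_ge0 ?ltW.
  lra.
split=> //.
(* Taylor expansion of the quadratic gap at x: the remainder p/2 (x' - x)^2 is nonnegative. *)
have taylor : k * (psi_primitive p M - psi_primitive p x') =
    k * (psi_primitive p M - psi_primitive p x) - k * ((1 - p * x) * (x' - x))
    + k * (p / 2 * (x' - x) ^+ 2).
  by rewrite /psi_primitive; field.
have rem_ge0 : 0 <= k * (p / 2 * (x' - x) ^+ 2).
  by rewrite mulr_ge0 ?(ltW k0) // mulr_ge0 ?sqr_ge0 // divr_ge0.
have drift_le : k * ((1 - p * x) * (x' - x)) <= h * k * (1 - p * x) * v.
  rewrite (_ : h * k * _ * v = k * ((1 - p * x) * (h * v))); last by ring.
  by rewrite ler_pM2l // ler_wpM2l // lerBlDl.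
move: v'_le; rewrite taylor mulrBl mul1r; lra.
Qed.

Section PositionInvariant.
Variables (R : realType) (N d : nat) (a : R -> R) (c1 c2 La kappa h : R).
Hypothesis N_gt0 : (0 < N)%N.
Hypothesis c1_gt0 : 0 < c1.
Hypothesis c1_le_c2 : c1 <= c2.
Hypothesis La_gt0 : 0 < La.
Hypothesis a_bounds : forall r, 0 <= r -> c1 <= a r <= c2.
Hypothesis a_lipschitz :
  forall r1 r2, 0 <= r1 -> 0 <= r2 -> `|a r1 - a r2| <= La * `|r1 - r2|.
Hypothesis kappa_gt0 : 0 < kappa.
Hypothesis h_gt0 : 0 < h.
Hypothesis hkappa_lt1 : h * kappa < 1.
Variables (X V : config R N d).
Hypothesis sol : is_MT_solution kappa h a X V.

Lemma Delta_pos_step n i j : Delta X n.+1 i j = Delta X n i j + h *: Delta V n i j.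
Proof.
rewrite /Delta; case: (sol n i) => -> _; case: (sol n j) => -> _.
by apply/rowP => m; rewrite !mxE; ring.
Qed.

Lemma Delta_vel_step n i j :
  Delta V n.+1 i j = (1 - h * kappa) *: Delta V n i j +
    (h * kappa) *: \sum_l (mt_phi a X n i l - mt_phi a X n j l) *: Delta V n l i.
Proof.
have shift : \sum_l mt_phi a X n j l *: (V n l - V n j) =
    \sum_l mt_phi a X n j l *: (V n l - V n i) + (V n i - V n j).
  rewrite -[X in _ + X]scale1r -(mt_phi_sum1 N_gt0 c1_gt0 a_bounds X n j).
  rewrite scaler_suml -big_split /=; apply: eq_bigr => l _.
  by rewrite -scalerDr addrA subrK.
rewrite /Delta; case: (sol n i) => _ ->; case: (sol n j) => _ ->.
under [X in _ = _ + _ *: X]eq_bigr do rewrite scalerBl.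
rewrite sumrB shift.
by apply/rowP => m; rewrite !mxE; ring.
Qed.

Lemma frob_Delta_pos_step n : frob (Delta X n.+1) <= frob (Delta X n) + h * frob (Delta V n).
Proof.
rewrite (eq_frob (Delta_pos_step n)).
by apply: le_trans (frobD _ (fun i j => h *: Delta V n i j)) _; rewrite frobZ gtr0_norm.
Qed.

Lemma frob_Delta_vel_step n : frob (Delta V n.+1) <=
  (1 - h * kappa * psi N La c1 c2 (frob (Delta X n))) * frob (Delta V n).
Proof.
have hk_gt0 : 0 < h * kappa by rewrite mulr_gt0.
rewrite (eq_frob (Delta_vel_step n)); apply: le_trans (frobD _ _) _.
rewrite !frobZ (gtr0_norm hk_gt0) ger0_norm; last by rewrite subr_ge0 ltW.
rewrite [X in _ <= X](_ : _ = (1 - h * kappa) * frob (Delta V n) + h * kappa *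
  (phi_lip N La c1 c2 * N%:R * frob (Delta X n) * frob (Delta V n))); last by rewrite /psi; ring.
by rewrite lerD2l ler_wpM2l ?(ltW hk_gt0) ?frob_weight_diff_le ?ltW.
Qed.

Lemma frob_Delta_pos_lt_bigM :
  frob (Delta X 0) < bigM N La c1 c2 ->
  frob (Delta V 0) < kappa *
    (\int[lebesgue_measure]_(s in `[frob (Delta X 0), bigM N La c1 c2]) psi N La c1 c2 s) ->
  forall n, frob (Delta X n) < bigM N La c1 c2.
Proof.
move=> x0_lt v0_lt.
set M := bigM N La c1 c2 in x0_lt v0_lt *.
set p := phi_lip N La c1 c2 * N%:R.
have p_gt0 : 0 < p by rewrite mulr_gt0 ?ltr0n ?phi_lip_gt0.
have pM : p * M = 1 / 4.
  by rewrite /p /M /bigM; field; rewrite pnatr_eq0 -lt0n N_gt0 gt_eqF ?phi_lip_gt0.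
have int_psi : \int[lebesgue_measure]_(s in `[frob (Delta X 0), M]) psi N La c1 c2 s =
    psi_primitive p M - psi_primitive p (frob (Delta X 0)) := integral_one_sub_mul p x0_lt.
rewrite int_psi in v0_lt.
suff inv : forall n, frob (Delta X n) < M /\
    frob (Delta V n) < kappa * (psi_primitive p M - psi_primitive p (frob (Delta X n))).
  by move=> n; case: (inv n).
elim=> [|n [x_lt v_lt]]; first by split.
exact: lyapunov_step h_gt0 kappa_gt0 hkappa_lt1 (ltW p_gt0) pM (frob_ge0 _) (frob_ge0 _)
  (frob_Delta_pos_step n) (frob_Delta_vel_step n) x_lt v_lt.
Qed.

End PositionInvariant.

Theorem lemma4p5 (R : realType) (N d : nat) (kappa h : R) (a : R -> R)
  (c1 c2 La : R) (X V Xb Vb : config R N d) :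
  (0 < N)%N -> (0 < d)%N -> 0 < kappa -> 0 < h ->
  0 < c1 -> c1 <= c2 -> 0 < La ->
  (forall r, 0 <= r -> c1 <= a r <= c2) ->
  (forall r1 r2, 0 <= r1 -> 0 <= r2 -> `|a r1 - a r2| <= La * `|r1 - r2|) ->
  h < 1 -> h < 1 / kappa ->
  is_MT_solution kappa h a X V ->
  is_MT_solution kappa h a Xb Vb ->
  Num.max (frob (Delta X 0)) (frob (Delta Xb 0)) < bigM N La c1 c2 ->
  frob (Delta V 0) <
    kappa * (\int[lebesgue_measure]_(s in `[frob (Delta X 0), bigM N La c1 c2])
                psi N La c1 c2 s) ->
  frob (Delta Vb 0) <
    kappa * (\int[lebesgue_measure]_(s in `[frob (Delta Xb 0), bigM N La c1 c2])
                psi N La c1 c2 s) ->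
  forall n : nat,
    \sum_(i < N) \sum_(j < N) enorm (I2 kappa h a X V Xb Vb n i j) ^+ 2
    <= 2 * h ^+ 2 * kappa ^+ 2 *
       (alpha a Xb n + La ^+ 2 * bigM N La c1 c2 ^+ 2 / (N%:R * c1 ^+ 2) * (1 + c2 / c1) ^+ 2)
       * frob (fun i j => Delta V n i j - Delta Vb n i j) ^+ 2.
Proof.
move=> N_gt0 _ kappa_gt0 h_gt0 c1_gt0 c1_le_c2 La_gt0 a_bounds a_lipschitz _ h_lt
  _ solb x0_lt _ vb0_lt n.
have hkappa_lt1 : h * kappa < 1 by move: h_lt; rewrite ltr_pdivlMr // mul1r.
have xb0_lt : frob (Delta Xb 0) < bigM N La c1 c2 by move: x0_lt; rewrite gt_max => /andP[].
have xb_lt := frob_Delta_pos_lt_bigM N_gt0 c1_gt0 c1_le_c2 La_gt0 a_bounds a_lipschitz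
  kappa_gt0 h_gt0 hkappa_lt1 solb xb0_lt vb0_lt n.
apply: le_trans (sum_sqr_I2_le N_gt0 c1_gt0 (ltW La_gt0) a_bounds a_lipschitz Xb n X V Vb
  kappa h) _.
rewrite exprMn [2 * (_ * _)]mulrA; apply: ler_wpM2r; first exact: sqr_ge0.
apply: ler_wpM2l; first by rewrite mulr_ge0 ?sqr_ge0 // mulr_ge0 ?sqr_ge0.
rewrite lerD2l (_ : La ^+ 2 * _ / _ * _ =
  phi_lip N La c1 c2 ^+ 2 * N%:R * bigM N La c1 c2 ^+ 2); last first.
  by rewrite /phi_lip; field; rewrite pnatr_eq0 -lt0n N_gt0 gt_eqF.
apply: ler_wpM2l; first by rewrite mulr_ge0 ?sqr_ge0 ?ler0n.
have M_ge0 := le_trans (frob_ge0 _) (ltW xb_lt).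
by rewrite ler_sqr ?nnegrE ?frob_ge0 // ltW.
Qed.
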